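(* For every 3-uniform hypergraph $\mathcal{H}$ there exists a graph $G$ in which every edge is contained in a triangle such that the domination game on $\mathcal{H}$ is equivalent to the domination game on $G$; and conversely, for every graph $G$ in which every edge is contained in a triangle there exists a 3-uniform hypergraph $\mathcal{H}$ such that the domination game on $\mathcal{H}$ is equivalent to the domination game on $G$.
   Context: Hypergraphs and graphs are finite. Two distinct vertices are adjacent if some edge contains both; $N[v]$ is $v$ together with its adjacent vertices, $N[S]=\bigcup_{v\in S}N[v]$. In the domination game, two players alternately choose vertices $v_1,v_2,\dots$; with $D_i=\{v_1,\dots,v_i\}$, a sequence $v_1,\dots,v_d$ is a legal game if $N[v_i]\setminus N[D_{i-1}]\ne\emptyset$ for all $2\le i\le d$ and $N[D_d]$ is the whole vertex set. Two domination games, on $\mathcal{H}_1$ and $\mathcal{H}_2$, are equivalent if $V(\mathcal{H}_1)=V(\mathcal{H}_2)$ and every sequence $v_1,\dots,v_d$ is a legal game on $\mathcal{H}_1$ iff it is a legal game on $\mathcal{H}_2$. *)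

From mathcomp Require Import all_boot.
Set Implicit Arguments. Unset Strict Implicit. Unset Printing Implicit Defensive.

(* A (hyper)graph on the finite vertex set V (= the whole finType) is given
   by its set of edges E : {set {set V}}. *)
Section Dom.
Variable V : finType.
Implicit Types (E : {set {set V}}) (u v : V) (s : seq V).

Definition adj E u v : bool :=
  (u != v) && [exists e in E, (u \in e) && (v \in e)].

Definition cnbhd E v : {set V} := [set u | (u == v) || adj E v u].

Definition cnbhdS E s : {set V} := \bigcup_(v <- s) cnbhd E v.

Definition legal_game E s : Prop :=
  (forall p v q, s = p ++ v :: q -> p != [::] ->
     ~~ (cnbhd E v \subset cnbhdS E p)) /\
  cnbhdS E s = [set: V].

Definition equiv_games E1 E2 : Prop :=
  forall s, legal_game E1 s <-> legal_game E2 s.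

Definition three_uniform E : Prop := forall e, e \in E -> #|e| = 3.

Definition is_graph E : Prop := forall e, e \in E -> #|e| = 2.

Definition edges_in_triangles E : Prop :=
  forall u v, [set u; v] \in E ->
    exists w, [set u; w] \in E /\ [set v; w] \in E /\ w != u /\ w != v.
End Dom.

From mathcomp Require Import all_boot.
Set Implicit Arguments. Unset Strict Implicit. Unset Printing Implicit Defensive.

(* Legality of a game depends on the hypergraph only through its adjacency
   relation. A 3-uniform hypergraph H has the same adjacency as its 2-shadow
   (the pairs covered by an edge of H), in which each pair lies in a triangle
   since it extends to a 3-edge of H. Conversely, a graph G whose edges lie in
   triangles has the same adjacency as the 3-uniform hypergraph of its
   triangles. *)

Section Domination.
Variable V : finType.
Implicit Types (E H G : {set {set V}}) (e f : {set V}) (u v w : V).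

Lemma eq_adj_cnbhd E1 E2 v : adj E1 =2 adj E2 -> cnbhd E1 v = cnbhd E2 v.
Proof. by move=> eq_adj; apply/setP=> x; rewrite !inE eq_adj. Qed.

Lemma eq_adj_cnbhdS E1 E2 s :
  adj E1 =2 adj E2 -> cnbhdS E1 s = cnbhdS E2 s.
Proof. by move=> eq_adj; apply: eq_bigr => v _; apply: eq_adj_cnbhd. Qed.

Lemma eq_adj_equiv_games E1 E2 : adj E1 =2 adj E2 -> equiv_games E1 E2.
Proof.
move=> eq_adj s; have eqN := eq_adj_cnbhdS _ eq_adj.
have eqN1 := eq_adj_cnbhd _ eq_adj.
rewrite /legal_game eqN; split=> -[new_move dom]; split=> // p v q sE p0.
  by rewrite -eqN1 -eqN; apply: new_move sE p0.
by rewrite eqN1 eqN; apply: new_move sE p0.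
Qed.

Lemma set2_eq e u v :
  #|e| = 2 -> u != v -> u \in e -> v \in e -> e = [set u; v].
Proof.
move=> e2 uv ue ve; apply/esym/eqP; rewrite eqEcard cards2 uv e2 andbT.
by rewrite subUset !sub1set ue ve.
Qed.

Definition shadow2 H : {set {set V}} :=
  [set e : {set V} | (#|e| == 2) && [exists f in H, e \subset f]].

Definition triangles G : {set {set V}} :=
  [set e : {set V} | (#|e| == 3) &&
     [forall x in e, forall y in e, (x != y) ==> ([set x; y] \in G)]].

Lemma shadow2_graph H : is_graph (shadow2 H).
Proof. by move=> e; rewrite inE => /andP[/eqP]. Qed.

Lemma mem_shadow2 H f u v :
  f \in H -> u != v -> u \in f -> v \in f -> [set u; v] \in shadow2 H.
Proof.
move=> fH uv uf vf; rewrite inE cards2 uv; apply/exists_inP; exists f => //.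
by rewrite subUset !sub1set uf vf.
Qed.

Lemma shadow2_edges_in_triangles H :
  (forall f, f \in H -> 2 < #|f|) -> edges_in_triangles (shadow2 H).
Proof.
move=> H_gt2 u v; rewrite inE cards2 => /andP[uv /exists_inP[f fH uv_f]].
have {}uv : u != v by case: (u != v) uv.
have [uf vf] : u \in f /\ v \in f by move: uv_f; rewrite subUset !sub1set => /andP.
have : 0 < #|f :\: [set u; v]|.
  by rewrite cardsD (setIidPr uv_f) cards2 uv subn_gt0 H_gt2.
case/card_gt0P=> w; rewrite !inE negb_or => /andP[/andP[wu wv] wf].
by exists w; rewrite !(mem_shadow2 fH) // eq_sym.
Qed.

Lemma adj_shadow2 H : adj (shadow2 H) =2 adj H.
Proof.
move=> u v; rewrite /adj; have [uv /=|//] := boolP (u != v).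
apply/exists_inP/exists_inP=> [[e]|[f fH /andP[uf vf]]].
  rewrite inE => /andP[_ /exists_inP[f fH ef]] /andP[ue ve].
  by exists f; rewrite // (subsetP ef u ue) (subsetP ef v ve).
by exists [set u; v]; [apply: mem_shadow2 fH uv uf vf | rewrite !inE !eqxx orbT].
Qed.

Lemma triangles_three_uniform G : three_uniform (triangles G).
Proof. by move=> e; rewrite inE => /andP[/eqP]. Qed.

Lemma mem_triangles G u v w :
  u != v -> u != w -> v != w ->
  [set u; v] \in G -> [set u; w] \in G -> [set v; w] \in G ->
  [set u; v; w] \in triangles G.
Proof.
move=> uv uw vw uvG uwG vwG; rewrite inE; apply/andP; split.
  by rewrite -setUA cardsU1 cards2 vw !inE negb_or uv uw.
have set2C (x y : V) : [set x; y] = [set y; x] by rewrite setUC.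
apply/forall_inP=> x; rewrite !inE => x3; apply/forall_inP=> y; rewrite !inE => y3.
case/orP: x3 => [/orP[]|] /eqP->; case/orP: y3 => [/orP[]|] /eqP->;
  by rewrite ?eqxx ?(set2C v u) ?(set2C w u) ?(set2C w v) ?uvG ?uwG ?vwG ?implybT.
Qed.

Lemma adj_triangles G :
  is_graph G -> edges_in_triangles G -> adj (triangles G) =2 adj G.
Proof.
move=> graphG triG u v; rewrite /adj; have [uv /=|//] := boolP (u != v).
apply/exists_inP/exists_inP=> [[t]|[e eG /andP[ue ve]]].
  rewrite inE => /andP[_ /forall_inP pairs_t] /andP[ut vt].
  exists [set u; v]; last by rewrite !inE !eqxx orbT.
  by move: (pairs_t u ut) => /forall_inP /(_ v vt); rewrite uv.
have uvG : [set u; v] \in G by rewrite -(set2_eq (graphG e eG) uv ue ve).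
have [w [uwG [vwG [wu wv]]]] := triG u v uvG.
exists [set u; v; w]; last by rewrite !inE !eqxx ?orbT.
by apply: mem_triangles; rewrite // eq_sym.
Qed.

End Domination.

Theorem proposition3 (V : finType) :
  (forall H : {set {set V}}, three_uniform H ->
     exists G : {set {set V}},
       is_graph G /\ edges_in_triangles G /\ equiv_games H G) /\
  (forall G : {set {set V}}, is_graph G -> edges_in_triangles G ->
     exists H : {set {set V}}, three_uniform H /\ equiv_games H G).
Proof.
split=> [H H3 | G graphG triG].
- exists (shadow2 H); split; first exact: shadow2_graph.
  split; first by apply: shadow2_edges_in_triangles => f /H3 ->.
  by apply: eq_adj_equiv_games => u v; rewrite adj_shadow2.
- exists (triangles G); split; first exact: triangles_three_uniform.
  exact/eq_adj_equiv_games/adj_triangles.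
Qed.
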